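(* Let $n\ge3$. There is no isomorphism preserving the structure of $\mathbb{Z}_2^n$-graded algebra between $\mathbb{O}_{0,n}$ and $\mathbb{O}_{n,0}$.
   Context: $\mathbb{Z}_2=\{0,1\}$. For $p+q=n\ge3$, $\mathbb{O}_{p,q}$ is the real algebra with basis $\{u_x: x\in\mathbb{Z}_2^n\}$ and product $u_x\cdot u_y=(-1)^{f(x,y)}u_{x+y}$, where $f(x,y)=\sum_{1\le i<j<k\le n}(x_ix_jy_k+x_iy_jx_k+y_ix_jx_k)+\sum_{1\le i\le j\le n}x_iy_j+\sum_{1\le i\le p}x_iy_i$. An isomorphism preserving the graded structure is an algebra isomorphism sending each homogeneous element (scalar multiple of some $u_x$) to a homogeneous element. *)

From HB Require Import structures.
From mathcomp Require Import all_boot all_order all_algebra.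
From mathcomp Require Import reals.
Set Implicit Arguments. Unset Strict Implicit. Unset Printing Implicit Defensive.
Import Order.TTheory GRing.Theory Num.Theory.
Local Open Scope ring_scope.

(* Z_2^n, indexed by 'I_n (index i corresponds to paper's index i+1). *)
Notation Z2n n := {ffun 'I_n -> bool}.

Definition z2add n (x y : Z2n n) : Z2n n := [ffun i => x i (+) y i].

(* The twisting function f(x,y), as a natural number (only its parity matters). *)
Definition ftw (n p : nat) (x y : Z2n n) : nat :=
  (\sum_(i < n) \sum_(j < n) \sum_(k < n)
      if (i < j < k)%N then
        (x i && x j && y k) + (x i && y j && x k) + (y i && x j && x k)
      else 0)%N
  + (\sum_(i < n) \sum_(j < n) if (i <= j)%N then (x i && y j : nat) else 0)%N
  + (\sum_(i < n | (i < p)%N) (x i && y i : nat))%N.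

(* Underlying vector space: R-valued functions on Z_2^n, i.e. sum_x a_x u_x. *)
Notation OV R n := {ffun Z2n n -> (R : realType)^o}.

Definition ub (R : realType) n (x : Z2n n) : OV R n := [ffun y => (y == x)%:R].

(* product of O_{p,q}, p + q = n: bilinear extension of
   u_x . u_y = (-1)^f(x,y) u_{x+y} *)
Definition Omul (R : realType) (n p : nat) (a b : OV R n) : OV R n :=
  \sum_(x : Z2n n) \sum_(y : Z2n n)
     (a x * b y * (-1) ^+ @ftw n p x y) *: @ub R n (z2add x y).

Definition homogeneous (R : realType) n (h : OV R n) : Prop :=
  exists (c : R) (x : Z2n n), h = c *: @ub R n x.

Definition graded_iso (R : realType) n (m1 m2 : OV R n -> OV R n -> OV R n)
    (phi : OV R n -> OV R n) : Prop :=
  [/\ (forall (a : R) (u v : OV R n), phi (a *: u + v) = a *: phi u + phi v),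
      bijective phi,
      (forall u v, phi (m1 u v) = m2 (phi u) (phi v)) &
      (forall h, homogeneous h -> homogeneous (phi h))].

From HB Require Import structures.
From mathcomp Require Import all_boot all_order all_algebra.
From mathcomp Require Import reals zify.
Set Implicit Arguments. Unset Strict Implicit. Unset Printing Implicit Defensive.

(* A graded isomorphism phi sends each u_x to c u_(sigma x) with c <> 0 and
   sigma injective, and it fixes the unit u_0.  Every square u_x u_x is
   +-u_0, and (c u_y)(c u_y) = c^2 u_y u_y with c^2 > 0, so sigma maps the
   u_x squaring to -u_0 in O_(0,n) injectively to those squaring to -u_0 in
   O_(n,0).  But for x of weight w, f(x,x) = 3 C(w,3) + C(w,2) + w, plus w
   in O_(n,0); hence u_x u_x = -u_0 iff w <> 0 mod 4 in O_(0,n), and iff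
   w = 2 mod 4 in O_(n,0), a strictly smaller set. *)

Section ElementarySymmetric.
Variable b : nat -> bool.

Definition esym1 m := (\sum_(i < m) (b i : nat))%N.
Definition esym2 m :=
  (\sum_(i < m) \sum_(j < m) if i < j then (b i && b j : nat) else 0)%N.
Definition esym3 m :=
  (\sum_(i < m) \sum_(j < m) \sum_(k < m)
     if i < j < k then (b i && b j && b k : nat) else 0)%N.

Lemma esym1S m : esym1 m.+1 = esym1 m + b m.
Proof. by rewrite /esym1 big_ord_recr. Qed.

Lemma esym2S m : esym2 m.+1 = esym2 m + esym1 m * b m.
Proof.
rewrite /esym2 big_ord_recr /= [X in _ + X]big1 => [|j _]; last first.
  by rewrite ltnNge -ltnS ltn_ord.
rewrite addn0 /esym1 big_distrl -big_split /=; apply: eq_bigr => i _.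
by rewrite big_ord_recr /= ltn_ord mulnb.
Qed.

Lemma esym3S m : esym3 m.+1 = esym3 m + esym2 m * b m.
Proof.
rewrite /esym3 big_ord_recr /= [X in _ + X]big1 => [|j _]; last first.
  rewrite big1 // => k _; case: ifP => // /andP[lt_ij lt_jk].
  by move: (ltn_ord k) (ltn_ord j); lia.
rewrite addn0 /esym2 !big_distrl -big_split /=; apply: eq_bigr => i _.
rewrite big_ord_recr /= [X in _ + X]big1 => [|k _]; last first.
  by case: ifP => // /andP[_ lt_mk]; move: (ltn_ord k); lia.
rewrite addn0 !big_distrl -big_split /=; apply: eq_bigr => j _.
by rewrite big_ord_recr /= ltn_ord andbT; case: ifP; rewrite ?mul0n // mulnb.
Qed.

Lemma esym2_leq m :
  (\sum_(i < m) \sum_(j < m) if i <= j then (b i && b j : nat) else 0)%N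
  = esym2 m + esym1 m.
Proof.
rewrite /esym2 /esym1 -big_split /=; apply: eq_bigr => i _.
rewrite [LHS](bigD1 i) // [in RHS](bigD1 i) //= leqnn ltnn andbb add0n addnC.
congr addn.
by apply: eq_bigr => j ne_ji; rewrite leq_eqVlt val_eqE eq_sym (negbTE ne_ji).
Qed.

(* For a 0/1 sequence of weight w, esym2 = C(w,2) and esym3 = C(w,3); these
   are their parities (Lucas). *)
Lemma odd_esym m :
  odd (esym2 m) = (2 <= esym1 m %% 4) /\ odd (esym3 m) = (esym1 m %% 4 == 3).
Proof.
elim: m => [|m [IH2 IH3]]; first by rewrite /esym1 /esym2 /esym3 !big_ord0.
by rewrite esym1S esym2S esym3S; case: (b m); rewrite ?muln0 ?muln1 ?addn0; lia.
Qed.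

End ElementarySymmetric.

Definition z2zero {n} : Z2n n := [ffun => false].

Section DiagonalTwist.
Variable n : nat.
Implicit Types x y : Z2n n.

Definition weight x := (\sum_(i < n) (x i : nat))%N.

Definition bits x (k : nat) : bool := if insub k is Some i then x i else false.

Lemma bitsE x (i : 'I_n) : bits x i = x i.
Proof. by rewrite /bits valK. Qed.

Lemma esym1_bits x : esym1 (bits x) n = weight x.
Proof. by apply: eq_bigr => i _; rewrite bitsE. Qed.

Lemma z2addxx x : z2add x x = z2zero.
Proof. by apply/ffunP => i; rewrite !ffunE addbb. Qed.

Lemma ftw0l p y : ftw p z2zero y = 0.
Proof.
have z0 (i : 'I_n) : z2zero i = false by rewrite ffunE.
rewrite /ftw !big1 // => i _; rewrite ?z0 //; apply: big1 => j _.
- by case: ifP.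
- by apply: big1 => k _; rewrite !z0 !andbF; case: ifP.
Qed.

Lemma ftw_diag p x :
  ftw p x x = (3 * esym3 (bits x) n + esym2 (bits x) n + weight x
               + \sum_(i < n | i < p) (x i : nat))%N.
Proof.
rewrite /ftw -esym1_bits -[3 * _ + _ + _]addnA -esym2_leq; congr (_ + _ + _).
- rewrite /esym3 big_distrr; apply: eq_bigr => i _; rewrite big_distrr.
  apply: eq_bigr => j _; rewrite big_distrr; apply: eq_bigr => k _.
  by rewrite !bitsE; case: ifP => _; case: (x i && x j && x k).
- by apply: eq_bigr => i _; apply: eq_bigr => j _; rewrite !bitsE.
- by apply: eq_bigr => i _; rewrite andbb.
Qed.

Lemma odd_ftw_diag0 x : odd (ftw 0 x x) = (weight x %% 4 != 0).
Proof.
have [odd2 odd3] := odd_esym (bits x) n; rewrite esym1_bits in odd2 odd3.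
rewrite ftw_diag big_pred0 => [|i]; last by rewrite ltn0.
rewrite addn0 !oddD odd2 odd3 -[odd (weight x)](odd_mod _ (erefl : odd 4 = false)).
by case: (weight x %% 4) (ltn_pmod (weight x) (isT : 0 < 4)) => [|[|[|[]]]].
Qed.

Lemma odd_ftw_diagn x : odd (ftw n x x) = (weight x %% 4 == 2).
Proof.
have [odd2 odd3] := odd_esym (bits x) n; rewrite esym1_bits in odd2 odd3.
rewrite ftw_diag (eq_bigl xpredT) => [|i]; last by rewrite ltn_ord.
rewrite !oddD odd2 odd3 -[odd (weight x)](odd_mod _ (erefl : odd 4 = false)).
by case: (weight x %% 4) (ltn_pmod (weight x) (isT : 0 < 4)) => [|[|[|[]]]].
Qed.

End DiagonalTwist.

(* The basis vectors [u_x] with [u_x * u_x = - u_0] in [O_{p,n-p}]. *)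
Definition neg_squares n p : {set Z2n n} := [set x | odd (ftw p x x)].

Lemma neg_squares_proper n : 0 < n -> neg_squares n n \proper neg_squares n 0.
Proof.
move=> n_gt0; apply/properP; split.
  by apply/subsetP => x; rewrite !inE (odd_ftw_diag0 x) (odd_ftw_diagn x) => /eqP ->.
pose e0 : Z2n n := [ffun i => val i == 0].
have weight_e0 : weight e0 = 1.
  rewrite /weight (bigD1 (Ordinal n_gt0)) //= big1 => [|i ne_i0]; first by rewrite ffunE.
  by rewrite ffunE -(inj_eq val_inj) /= in ne_i0 *; rewrite (negbTE ne_i0).
by exists e0; rewrite inE ?(odd_ftw_diag0 e0) ?(odd_ftw_diagn e0) weight_e0.
Qed.

Import GRing.Theory Num.Theory.
Local Open Scope ring_scope.

Lemma odd_eq_signr_sqr (R : realDomainType) (c : R) k l :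
  (-1) ^+ k = c ^+ 2 * (-1) ^+ l -> odd k = odd l.
Proof.
rewrite -signr_odd -[(-1) ^+ l]signr_odd.
have := sqr_ge0 c; case: (odd k); case: (odd l) => //=.
- by rewrite expr0 mulr1 => c2_ge0 eq_c2; rewrite -eq_c2 ler0N1 in c2_ge0.
- rewrite expr1 mulrN1 => c2_ge0 /eqP; rewrite eq_sym eqr_oppLR => /eqP eq_c2.
  by rewrite eq_c2 ler0N1 in c2_ge0.
Qed.

Section BasisProducts.
Variables (R : realType) (n p : nat).
Implicit Types (c d : R) (x y : Z2n n).

Lemma scale_ubE c x y : (c *: ub R x) y = c *+ (y == x).
Proof. by rewrite !ffunE; apply: mulr_natr. Qed.

Lemma scale_ub_inj c d x y :
  c != 0 -> c *: ub R x = d *: ub R y -> x = y /\ c = d.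
Proof.
move=> c_neq0 /ffunP/(_ x); rewrite !scale_ubE eqxx mulr1n.
by case: eqVneq => [-> | _]; rewrite ?mulr1n // mulr0n => c0; rewrite c0 eqxx in c_neq0.
Qed.

Lemma ub_neq0 x : ub R x != 0.
Proof. by apply/eqP => /ffunP/(_ x); rewrite !ffunE eqxx => /eqP; rewrite oner_eq0. Qed.

Lemma Omul_ub c d x y :
  Omul p (c *: ub R x) (d *: ub R y) = (c * d * (-1) ^+ ftw p x y) *: ub R (z2add x y).
Proof.
rewrite /Omul (bigD1 x) //= [X in _ + X]big1 => [|x' ne_x'x]; last first.
  by rewrite big1 // => y' _; rewrite scale_ubE (negbTE ne_x'x) !mul0r scale0r.
rewrite addr0 (bigD1 y) //= [X in _ + X]big1 => [|y' ne_y'y]; last first.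
  by rewrite !scale_ubE (negbTE ne_y'y) mulr0 mul0r scale0r.
by rewrite addr0 !scale_ubE !eqxx !mulr1n.
Qed.

Lemma Omul_ub_sqr c x :
  Omul p (c *: ub R x) (c *: ub R x) = (c ^+ 2 * (-1) ^+ ftw p x x) *: ub R z2zero.
Proof. by rewrite Omul_ub z2addxx expr2. Qed.

End BasisProducts.

Section GradedIso.
Variables (R : realType) (n p1 p2 : nat) (phi : OV R n -> OV R n).
Hypothesis phi_iso : graded_iso (Omul p1) (Omul p2) phi.

Lemma iso0 : phi 0 = 0.
Proof.
have [phi_lin _ _ _] := phi_iso.
by have := phi_lin 1 0 0; rewrite scaler0 addr0 scale1r -{1}[phi 0]addr0 => /addrI <-.
Qed.

Lemma iso_scale a u : phi (a *: u) = a *: phi u.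
Proof. by have [phi_lin _ _ _] := phi_iso; rewrite -[a *: u]addr0 phi_lin iso0 addr0. Qed.

Lemma iso_inj : injective phi.
Proof. by case: phi_iso => _ /bij_inj. Qed.

Definition grade_map x : Z2n n := odflt x [pick y | phi (ub R x) y != 0].

Lemma iso_ub x : exists2 c, c != 0 & phi (ub R x) = c *: ub R (grade_map x).
Proof.
have [_ _ _ phi_hom] := phi_iso.
have [|c [y phi_x]] := phi_hom (ub R x); first by exists 1, x; rewrite scale1r.
have c_neq0 : c != 0.
  apply: contra_neq (ub_neq0 R x) => c0.
  by apply: iso_inj; rewrite phi_x c0 scale0r iso0.
exists c => //; rewrite /grade_map; case: pickP => [y' | no_support] /=.
  by rewrite phi_x scale_ubE; case: (eqVneq y' y) => [-> // | _] /=; rewrite mulr0n eqxx.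
by have := no_support y; rewrite phi_x scale_ubE eqxx mulr1n (negbTE c_neq0).
Qed.

Lemma grade_map_inj : injective grade_map.
Proof.
move=> x1 x2 eq_g; have [c1 c1_neq0 phi_x1] := iso_ub x1.
have [c2 c2_neq0 phi_x2] := iso_ub x2.
have : phi (c2 *: ub R x1) = phi (c1 *: ub R x2).
  by rewrite !iso_scale phi_x1 phi_x2 eq_g !scalerA mulrC.
by move/iso_inj/(scale_ub_inj c2_neq0) => [].
Qed.

Lemma iso_ub0 : phi (ub R z2zero) = ub R z2zero.
Proof.
have [_ _ phi_mul _] := phi_iso.
have [d d_neq0 phi_0] := iso_ub z2zero.
have := phi_mul (ub R z2zero) (ub R z2zero).
rewrite -[ub R z2zero]scale1r Omul_ub_sqr ftw0l expr1n !mul1r scale1r phi_0 Omul_ub_sqr.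
move/(scale_ub_inj d_neq0) => [-> d_sqr]; rewrite ftw0l expr0 mulr1 in d_sqr.
suff -> : d = 1 by rewrite scale1r.
by apply: (mulIf d_neq0); rewrite mul1r -expr2 -d_sqr.
Qed.

Lemma odd_ftw_grade_map x : odd (ftw p2 (grade_map x) (grade_map x)) = odd (ftw p1 x x).
Proof.
have [_ _ phi_mul _] := phi_iso.
have [c c_neq0 phi_x] := iso_ub x.
have := phi_mul (ub R x) (ub R x).
rewrite -[ub R x]scale1r Omul_ub_sqr expr1n mul1r iso_scale iso_ub0 scale1r.
rewrite phi_x Omul_ub_sqr => /scale_ub_inj [|_ /odd_eq_signr_sqr //].
by rewrite signr_eq0.
Qed.

Lemma card_neg_squares : (#|neg_squares n p1| <= #|neg_squares n p2|)%N.
Proof.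
rewrite -(card_imset _ grade_map_inj); apply/subset_leq_card/subsetP.
by move=> _ /imsetP[x x_neg ->]; rewrite inE in x_neg; rewrite inE odd_ftw_grade_map.
Qed.

End GradedIso.

Theorem mainTheorem11 (R : realType) (n : nat) :
  (3 <= n)%N ->
  ~ exists phi : OV R n -> OV R n, @graded_iso R n (@Omul R n 0) (@Omul R n n) phi.
Proof.
move=> n_ge3 [phi phi_iso].
have n_gt0 : (0 < n)%N by apply: leq_trans n_ge3.
have := proper_card (neg_squares_proper n_gt0).
by rewrite ltnNge (card_neg_squares phi_iso).
Qed.
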